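(* Consider a 3-petal flower whose center coin has radius $1$ and whose outer coins have radii $r_1,r_2,r_3$, with internal angles $\theta_1,\theta_2,\theta_3$. Then $r_1,r_2,r_3$ are all rational if and only if $\cos\theta_i$ and $\sin\theta_i$ are rational for each $i=1,2,3$.
   Context: A 3-petal flower is a configuration of four closed disks (coins) in the Euclidean plane with pairwise disjoint interiors, a center coin and three outer coins, such that every two of the four coins are externally tangent. With center coin of radius $r$ and outer radii $r_1,r_2,r_3$, the internal angle $\theta_i$ ($i=1,2,3$, indices mod 3) is the angle at the center of the center coin between the centers of outer coins $i$ and $i+1$, so $\cos\theta_i=\frac{(r+r_i)^2+(r+r_{i+1})^2-(r_i+r_{i+1})^2}{2(r+r_i)(r+r_{i+1})}$ and $\theta_1+\theta_2+\theta_3=2\pi$. *)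

From Stdlib Require Import Reals QArith Lra.
Open Scope R_scope.

Definition is_rat (x : R) : Prop := exists q : Q, x = Q2R q.

Definition dist2 (p q : R * R) : R :=
  sqrt ((fst p - fst q) ^ 2 + (snd p - snd q) ^ 2).

Definition ext_tangent (p : R * R) (r : R) (q : R * R) (s : R) : Prop :=
  0 < r /\ 0 < s /\ dist2 p q = r + s.

(** cos of the internal angle at the center coin (radius r) between outer
    coins of radii a and b (law of cosines, as in the paper). *)
Definition cos_int (r a b : R) : R :=
  ((r + a) ^ 2 + (r + b) ^ 2 - (a + b) ^ 2) / (2 * (r + a) * (r + b)).

Definition theta (r a b : R) : R := acos (cos_int r a b).

Definition three_petal_flower (c c1 c2 c3 : R * R) (r r1 r2 r3 : R) : Prop :=
  ext_tangent c r c1 r1 /\ ext_tangent c r c2 r2 /\ ext_tangent c r c3 r3 /\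
  ext_tangent c1 r1 c2 r2 /\ ext_tangent c2 r2 c3 r3 /\ ext_tangent c3 r3 c1 r1 /\
  theta r r1 r2 + theta r r2 r3 + theta r r3 r1 = 2 * PI.

(* Let [k_i] be the cotangent of the half angle [theta_i / 2]. By the half-angle
   (Weierstrass) substitution, [(cos theta_i, sin theta_i)] is a rational point iff
   [k_i] is rational. The law of cosines gives
   [sin (theta / 2) ^ 2 = a b / ((1 + a) (1 + b))] for neighbouring radii [a, b], and
   since the half angles sum to [PI], the sine addition formula yields
   [k_1 + k_2 = 1 + 1 / r_2] and its two rotations. This linear system is invertible
   over the rationals, so the [k_i] are rational iff the [r_i] are. *)
From Stdlib Require Import Reals QArith Lra Qreals.
Open Scope R_scope.

Lemma is_rat_Q2R (q : Q) : is_rat (Q2R q).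
Proof. now exists q. Qed.

Lemma is_rat_IZR (z : Z) : is_rat (IZR z).
Proof. exists (inject_Z z). unfold Q2R; simpl. field. Qed.

Lemma is_rat_plus x y : is_rat x -> is_rat y -> is_rat (x + y).
Proof. intros [p ->] [q ->]. rewrite <- Q2R_plus. apply is_rat_Q2R. Qed.

Lemma is_rat_mult x y : is_rat x -> is_rat y -> is_rat (x * y).
Proof. intros [p ->] [q ->]. rewrite <- Q2R_mult. apply is_rat_Q2R. Qed.

Lemma is_rat_opp x : is_rat x -> is_rat (- x).
Proof. intros [p ->]. rewrite <- Q2R_opp. apply is_rat_Q2R. Qed.

Lemma is_rat_inv x : is_rat x -> is_rat (/ x).
Proof.
  intros [p ->]. destruct (Qeq_dec p 0) as [Hp | Hp].
  - rewrite (Qeq_eqR _ _ Hp), RMicromega.Q2R_0, Rinv_0. apply (is_rat_IZR 0).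
  - rewrite <- Q2R_inv by exact Hp. apply is_rat_Q2R.
Qed.

Lemma is_rat_minus x y : is_rat x -> is_rat y -> is_rat (x - y).
Proof. intros Hx Hy. apply is_rat_plus; [exact Hx | now apply is_rat_opp]. Qed.

Lemma is_rat_div x y : is_rat x -> is_rat y -> is_rat (x / y).
Proof. intros Hx Hy. apply is_rat_mult; [exact Hx | now apply is_rat_inv]. Qed.

Lemma is_rat_pow x n : is_rat x -> is_rat (x ^ n).
Proof.
  intros Hx. induction n as [| n IH]; simpl.
  - apply (is_rat_IZR 1).
  - now apply is_rat_mult.
Qed.

Ltac solve_is_rat :=
  repeat first
    [ assumption | apply (is_rat_IZR 1) | apply (is_rat_IZR 2)
    | apply is_rat_minus | apply is_rat_plus | apply is_rat_opp
    | apply is_rat_div | apply is_rat_mult | apply is_rat_inv | apply is_rat_pow ].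

(* No hypothesis [r <> 0] is needed, as [/ 0 = 0]. *)
Lemma is_rat_shift_inv_iff r : is_rat (1 + / r) <-> is_rat r.
Proof.
  split; intros Hq.
  - rewrite <- (Rinv_inv r). replace (/ r) with ((1 + / r) - 1) by ring. solve_is_rat.
  - solve_is_rat.
Qed.

Lemma is_rat_pairwise_sums_iff k1 k2 k3 :
  (is_rat k1 /\ is_rat k2 /\ is_rat k3) <->
  (is_rat (k1 + k2) /\ is_rat (k2 + k3) /\ is_rat (k3 + k1)).
Proof.
  split; intros (H1 & H2 & H3).
  - repeat split; solve_is_rat.
  - assert (Hhalf : forall x y z, is_rat (x + y) -> is_rat (y + z) -> is_rat (z + x) ->
              is_rat x).
    { intros x y z Hxy Hyz Hzx.
      replace x with (((x + y) - (y + z) + (z + x)) / 2) by field. solve_is_rat. }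
    repeat split; eapply Hhalf; eassumption.
Qed.

Definition cot_half (t : R) : R := cos (t / 2) / sin (t / 2).

Lemma is_rat_cos_sin_iff_cot_half t : 0 < t < PI ->
  (is_rat (cos t) /\ is_rat (sin t)) <-> is_rat (cot_half t).
Proof.
  intros Ht. unfold cot_half.
  set (s := sin (t / 2)). set (c := cos (t / 2)).
  assert (Hs : 0 < s) by (apply sin_gt_0; lra).
  assert (Hsc : s ^ 2 + c ^ 2 = 1).
  { rewrite <- (sin2_cos2 (t / 2)). unfold Rsqr. fold s c. ring. }
  assert (Hcos : cos t = c ^ 2 - s ^ 2).
  { replace t with (2 * (t / 2)) at 1 by field. rewrite cos_2a. fold s c. ring. }
  assert (Hsin : sin t = 2 * s * c).
  { replace t with (2 * (t / 2)) at 1 by field. rewrite sin_2a. fold s c. ring. }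
  assert (Hk2 : (c / s) ^ 2 + 1 = / s ^ 2).
  { replace ((c / s) ^ 2 + 1) with ((s ^ 2 + c ^ 2) / s ^ 2) by (field; lra).
    rewrite Hsc. field. lra. }
  split.
  - intros [Hc Hsn]. replace (c / s) with (sin t / (1 - cos t)); [solve_is_rat |].
    rewrite Hcos, Hsin. replace (1 - (c ^ 2 - s ^ 2)) with (2 * s ^ 2) by lra.
    field. lra.
  - intros Hk. set (k := c / s) in *.
    replace (cos t) with (1 - 2 / (k ^ 2 + 1)).
    2: { rewrite Hk2, Hcos. field_simplify; lra. }
    replace (sin t) with (2 * k / (k ^ 2 + 1)).
    2: { rewrite Hk2, Hsin. unfold k. field. lra. }
    split; solve_is_rat.
Qed.

Section InternalAngle.

Variables a b : R.
Hypotheses (Ha : 0 < a) (Hb : 0 < b).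

Let u := a * b / ((1 + a) * (1 + b)).

Lemma cos_int_1 : cos_int 1 a b = 1 - 2 * u.
Proof. unfold cos_int, u. field. lra. Qed.

Lemma cos_int_1_bounds : -1 < cos_int 1 a b < 1.
Proof.
  rewrite cos_int_1.
  assert (Hu : u * ((1 + a) * (1 + b)) = a * b) by (unfold u; field; lra).
  assert (0 < (1 + a) * (1 + b)) by nra.
  split; nra.
Qed.

Lemma cos_theta : cos (theta 1 a b) = cos_int 1 a b.
Proof. unfold theta. apply cos_acos. pose proof cos_int_1_bounds. lra. Qed.

Lemma theta_bounds : 0 < theta 1 a b < PI.
Proof.
  pose proof (acos_bound (cos_int 1 a b)) as Hbound. fold (theta 1 a b) in Hbound.
  pose proof cos_theta as Hcos. pose proof cos_int_1_bounds.
  split.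
  - destruct (Req_dec (theta 1 a b) 0) as [E | E]; [| lra].
    rewrite E, cos_0 in Hcos. lra.
  - destruct (Req_dec (theta 1 a b) PI) as [E | E]; [| lra].
    rewrite E, cos_PI in Hcos. lra.
Qed.

Lemma sin_half_theta_sqr : sin (theta 1 a b / 2) ^ 2 = u.
Proof.
  pose proof cos_theta as Hcos. rewrite cos_int_1 in Hcos.
  replace (theta 1 a b) with (2 * (theta 1 a b / 2)) in Hcos at 1 by field.
  rewrite cos_2a_sin in Hcos. lra.
Qed.

Lemma sin_half_theta_pos : 0 < sin (theta 1 a b / 2).
Proof. pose proof theta_bounds. apply sin_gt_0; lra. Qed.

End InternalAngle.

Lemma cot_half_add t1 t2 t3 : t1 + t2 + t3 = 2 * PI ->
  sin (t1 / 2) <> 0 -> sin (t2 / 2) <> 0 ->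
  cot_half t1 + cot_half t2 = sin (t3 / 2) / (sin (t1 / 2) * sin (t2 / 2)).
Proof.
  intros Hsum H1 H2. unfold cot_half.
  replace (t3 / 2) with (PI - (t1 / 2 + t2 / 2)) by lra.
  rewrite sin_PI_x, sin_plus. field. split; assumption.
Qed.

Lemma cot_half_theta_add a b d : 0 < a -> 0 < b -> 0 < d ->
  theta 1 a b + theta 1 b d + theta 1 d a = 2 * PI ->
  cot_half (theta 1 a b) + cot_half (theta 1 b d) = 1 + / b.
Proof.
  intros Ha Hb Hd Hsum.
  pose proof (sin_half_theta_pos a b Ha Hb) as P1.
  pose proof (sin_half_theta_pos b d Hb Hd) as P2.
  pose proof (sin_half_theta_pos d a Hd Ha) as P3.
  rewrite (cot_half_add _ _ _ Hsum) by lra.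
  (* Both sides are positive and their squares agree by [sin_half_theta_sqr]. *)
  apply Rsqr_inj.
  - apply Rlt_le, Rdiv_lt_0_compat; [exact P3 | nra].
  - assert (0 < / b) by (apply Rinv_0_lt_compat; exact Hb). lra.
  - unfold Rsqr.
    replace (_ / _ * (_ / _)) with
      (sin (theta 1 d a / 2) ^ 2 / (sin (theta 1 a b / 2) ^ 2 * sin (theta 1 b d / 2) ^ 2))
      by (field; lra).
    rewrite !sin_half_theta_sqr by assumption. field. lra.
Qed.

Theorem mainTheorem15 (c c1 c2 c3 : R * R) (r1 r2 r3 : R) :
  three_petal_flower c c1 c2 c3 1 r1 r2 r3 ->
  ((is_rat r1 /\ is_rat r2 /\ is_rat r3) <->
   ((is_rat (cos (theta 1 r1 r2)) /\ is_rat (sin (theta 1 r1 r2))) /\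
    (is_rat (cos (theta 1 r2 r3)) /\ is_rat (sin (theta 1 r2 r3))) /\
    (is_rat (cos (theta 1 r3 r1)) /\ is_rat (sin (theta 1 r3 r1))))).
Proof.
  intros ((_ & H1 & _) & (_ & H2 & _) & (_ & H3 & _) & _ & _ & _ & Hsum).
  pose proof (cot_half_theta_add r1 r2 r3 H1 H2 H3 Hsum) as E2.
  pose proof (cot_half_theta_add r2 r3 r1 H2 H3 H1 ltac:(lra)) as E3.
  pose proof (cot_half_theta_add r3 r1 r2 H3 H1 H2 ltac:(lra)) as E1.
  rewrite !is_rat_cos_sin_iff_cot_half by (apply theta_bounds; assumption).
  rewrite (is_rat_pairwise_sums_iff (cot_half (theta 1 r1 r2))), E1, E2, E3,
    !is_rat_shift_inv_iff.
  tauto.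
Qed.
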